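(* There is an absolute constant $c$ such that the following holds. Let $G=(V,E)$ be a graph with $n$ vertices, $m$ edges and degeneracy $d$, let $\mathcal{C}=\{C_\ell\}_{\ell\in I}$ be an LA-succinct clique cover of $G$, and let $\mathcal{A}=\{A_v\}_{v\in V}$ and $\mathcal{D}=\{D_\ell\}_{\ell\in I}$ be its admissibility sets and admissibility duals. Then $$\|\mathcal{A}\|=\|\mathcal{D}\|\le c\cdot\min\{|\mathcal{C}|\,n,\ d\,m\}.$$
   Context: All graphs are finite, simple, undirected, with no isolated vertices; $n=|V|$, $m=|E|$; $N(v)$ open neighbourhood, $N[v]=N(v)\cup\{v\}$. Degeneracy $d:=\max_H\delta_H$ over subgraphs $H$ of $G$ ($\delta_H$ minimum degree). A clique is a vertex set inducing a complete subgraph. $\|\mathcal{F}\|:=\sum_{F\in\mathcal{F}}|F|$. A clique cover is an indexed family of cliques covering every edge. LA-succinct construction: maintain a family $\mathcal{C}$ of cliques of $G$, initially empty; an edge is uncovered if it is contained in no member. Update rule on an uncovered edge $\{u,v\}$: (1) if some $C_\ell\in\mathcal{C}$ has $C_\ell\cup\{u,v\}$ a clique of $G$, choose exactly one such $C_\ell$ and replace it by $C_\ell\cup\{u,v\}$; (2) otherwise add a new member $\{u,v\}$ with a new label. Step (1) is always applied when applicable. An LA-succinct clique cover is a clique cover of $G$ obtained from the empty family by repeatedly applying this rule to uncovered edges. For a clique cover $\{C_\ell\}_{\ell\in I}$: admissibility sets $A_v:=\{\ell\in I: C_\ell\subseteq N[v]\}$ for $v\in V$; admissibility duals $D_\ell:=\{v\in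 V: C_\ell\subseteq N[v]\}$ for $\ell\in I$. *)

From mathcomp Require Import all_boot all_order.
Set Implicit Arguments. Unset Strict Implicit. Unset Printing Implicit Defensive.

Section Graphs.
Variable V : finType.

(* A graph is given by its edge set E : {set {set V}}; each edge is a 2-set. *)
Definition simple_graph_no_isolated (E : {set {set V}}) : Prop :=
  (forall e, e \in E -> #|e| = 2) /\ (forall v : V, exists2 e, e \in E & v \in e).

Definition cnbhd (E : {set {set V}}) (v : V) : {set V} :=
  [set u | (u == v) || ([set u; v] \in E)].

Definition is_clique (E : {set {set V}}) (K : {set V}) : bool :=
  [forall u in K, forall w in K, (u != w) ==> ([set u; w] \in E)].

(* A subgraph H = (S, F): S nonempty vertex set, F a set of edges of G inside S. *)
Definition is_subgraph (E : {set {set V}}) (H : {set V} * {set {set V}}) : bool :=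
  [&& H.1 != set0, H.2 \subset E & [forall e in H.2, e \subset H.1]].

Definition sub_deg (H : {set V} * {set {set V}}) (v : V) : nat :=
  #|[set e in H.2 | v \in e]|.

(* minimum degree of H (the initial value #|V| exceeds every degree; S is nonempty) *)
Definition min_deg (H : {set V} * {set {set V}}) : nat :=
  \big[minn/#|V|]_(v in H.1) sub_deg H v.

Definition degeneracy (E : {set {set V}}) : nat :=
  \max_(H : {set V} * {set {set V}} | is_subgraph E H) min_deg H.

(* Families of cliques indexed by labels 0..size s - 1 (a seq). *)
Definition covered (s : seq {set V}) (e : {set V}) : bool :=
  has (fun C : {set V} => e \subset C) s.

Definition la_step (E : {set {set V}}) (s t : seq {set V}) : Prop :=
  exists2 e, e \in E /\ ~~ covered s e &
    ((exists l, [/\ l < size s, is_clique E (nth set0 s l :|: e) &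
                   t = set_nth set0 s l (nth set0 s l :|: e)])
     \/
     ((forall l, l < size s -> ~~ is_clique E (nth set0 s l :|: e)) /\
      t = rcons s e)).

Inductive la_reach (E : {set {set V}}) : seq {set V} -> Prop :=
| la_reach_nil : la_reach E [::]
| la_reach_step s t : la_reach E s -> la_step E s t -> la_reach E t.

Definition is_clique_cover (E : {set {set V}}) (s : seq {set V}) : Prop :=
  (forall C, C \in s -> is_clique E C) /\ (forall e, e \in E -> covered s e).

Definition LA_succinct_cover (E : {set {set V}}) (s : seq {set V}) : Prop :=
  la_reach E s /\ is_clique_cover E s.

Definition adm_set (E : {set {set V}}) (s : seq {set V}) (v : V) : {set 'I_(size s)} :=
  [set l : 'I_(size s) | nth set0 s l \subset cnbhd E v].

Definition adm_dual (E : {set {set V}}) (s : seq {set V}) (l : 'I_(size s)) : {set V} :=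
  [set v : V | nth set0 s l \subset cnbhd E v].

Definition norm_A (E : {set {set V}}) (s : seq {set V}) : nat :=
  \sum_(v : V) #|adm_set E s v|.

Definition norm_D (E : {set {set V}}) (s : seq {set V}) : nat :=
  \sum_(l : 'I_(size s)) #|@adm_dual E s l|.

End Graphs.

From mathcomp Require Import all_boot all_order zify.

Set Implicit Arguments. Unset Strict Implicit. Unset Printing Implicit Defensive.

(* The equality of the two norms is double counting, and the bound |C| n on the first is
   trivial. For the bound d m, write K(e) for the set of vertices whose closed neighbourhood
   contains the edge e. Each label of an LA-succinct cover is created from an uncovered edge
   lying inside its clique, and distinct labels get distinct edges, so the norm of the duals
   is at most the sum of |K(e)| over the edges e. Deleting a vertex v of degree k decreases
   that sum by at most k(k+1) for the edges at v plus k^2 for the edges inside N(v); peeling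
   the graph along low-degree vertices bounds it by (2d+1) m. When d >= n the bound d m
   follows from |C| <= m instead. *)

Lemma card_set_sum (T : finType) (p : pred T) : #|[set x | p x]| = \sum_x p x.
Proof. by rewrite -sum1dep_card big_mkcond; apply: eq_bigr => x _; case: (p x). Qed.

Lemma sum_card_set_exchange (I J : finType) (P : I -> J -> bool) :
  \sum_i #|[set j | P i j]| = \sum_j #|[set i | P i j]|.
Proof.
under eq_bigr do rewrite card_set_sum.
by rewrite exchange_big; apply: eq_bigr => j _; rewrite card_set_sum.
Qed.

Section CommonNeighbourhoods.
Variables (V : finType) (E : {set {set V}}).
Hypothesis edge_card2 : forall e, e \in E -> #|e| = 2.

Definition edges_in (S : {set V}) := [set e in E | e \subset S].
Definition edges_at (S : {set V}) (v : V) := [set e in edges_in S | v \in e].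
Definition nbhd_in (S : {set V}) (v : V) := [set x in S | [set x; v] \in E].
Definition common_cnbhd (e : {set V}) := [set w | e \subset cnbhd E w].

Definition cnbhd_weight (S : {set V}) :=
  \sum_(e in edges_in S) #|common_cnbhd e :&: S|.

Lemma loop_notin_edges x : [set x; x] \notin E.
Proof. by apply/negP => /edge_card2; rewrite setUid cards1. Qed.

Lemma card_edges_through_le x (Y : {set V}) :
  #|[set e in E | (x \in e) && (e :\ x \subset Y)]| <= #|Y|.
Proof.
set A := [set e in E | _].
have injA : {in A &, injective (fun e => e :\ x)}.
  move=> e1 e2; rewrite !inE => /and3P[_ x1 _] /and3P[_ x2 _] eq12.
  by rewrite -(setD1K x1) -(setD1K x2) eq12.
rewrite -(card_in_imset injA); apply: leq_trans (leq_imset_card (@set1 V) Y).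
apply: subset_leq_card; apply/subsetP => _ /imsetP[e + ->].
rewrite inE => /and3P[/edge_card2 e2 xe sub].
have /cards1P[y Ey] : #|e :\ x| == 1.
  by move: e2; rewrite (cardsD1 x) xe add1n => -[->].
by rewrite Ey; apply: imset_f; move: sub; rewrite Ey sub1set.
Qed.

Lemma card_edges_in_le (X : {set V}) : #|edges_in X| <= #|X| * #|X|.
Proof.
apply: (@leq_trans (\sum_(e in edges_in X) \sum_(x in X) (x \in e))).
  rewrite -sum1_card; apply: leq_sum => e; rewrite inE => /andP[eE eX].
  have /card_gt0P[x xe] : 0 < #|e| by rewrite edge_card2.
  by rewrite (bigD1 x) ?xe //= (subsetP eX).
rewrite exchange_big /= -sum_nat_const; apply: leq_sum => x _.
rewrite -big_mkcondr sum1dep_card; apply: leq_trans (card_edges_through_le x X).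
apply: subset_leq_card; apply/subsetP => e; rewrite !inE => /andP[/andP[-> eX] ->].
by apply: subset_trans eX; apply: subD1set.
Qed.

Lemma card_nbhd_in_le v (S : {set V}) : v \in S -> #|nbhd_in S v| <= #|edges_at S v|.
Proof.
move=> vS.
have inj : {in nbhd_in S v &, injective (fun x => [set x; v])}.
  move=> x y; rewrite !inE => /andP[_ xE] /andP[_ yE] eqxy.
  have : x \in [set y; v] by rewrite -eqxy set21.
  rewrite !inE => /orP[/eqP // | /eqP xv].
  by move: xE; rewrite xv (negbTE (loop_notin_edges _)).
rewrite -(card_in_imset inj); apply: subset_leq_card.
apply/subsetP => _ /imsetP[x + ->]; rewrite !inE => /andP[xS ->].
by rewrite subUset !sub1set xS vS eqxx orbT.
Qed.

Lemma common_cnbhd_sub v (e S : {set V}) :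
  v \in e -> common_cnbhd e :&: S \subset v |: nbhd_in S v.
Proof.
move=> ve; apply/subsetP => w; rewrite !inE => /andP[/subsetP/(_ v ve) + wS].
by rewrite inE eq_sym setUC => /orP[-> // | ->]; rewrite wS orbT.
Qed.

Lemma edges_in_setD1_cnbhd_sub v (S : {set V}) :
  [set e in edges_in (S :\ v) | v \in common_cnbhd e] \subset edges_in (nbhd_in S v).
Proof.
apply/subsetP => e; rewrite !inE => /andP[/andP[-> eS] /subsetP vK] /=.
apply/subsetP => x xe; have := subsetP eS x xe; rewrite !inE => /andP[xv ->].
by have := vK x xe; rewrite inE (negbTE xv).
Qed.

Lemma edges_in_setD1 v (S : {set V}) :
  edges_in (S :\ v) = [set e in edges_in S | v \notin e].
Proof. by apply/setP => e; rewrite !inE subsetD1 andbA. Qed.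

Lemma card_edges_in_setD1 v (S : {set V}) :
  #|edges_in S| = #|edges_at S v| + #|edges_in (S :\ v)|.
Proof.
rewrite edges_in_setD1 -(cardsID [set e : {set V} | v \in e] (edges_in S)).
by congr addn; apply: eq_card => e; rewrite !inE // andbC.
Qed.

Lemma card_common_cnbhd_setD1 v (e S : {set V}) :
  #|common_cnbhd e :&: S| <= #|common_cnbhd e :&: (S :\ v)| + (v \in common_cnbhd e).
Proof.
rewrite (cardsD1 v) -setIDA addnC leq_add2l inE.
by case: (v \in common_cnbhd e); case: (v \in S).
Qed.

Lemma cnbhd_weight_setD1 v (S : {set V}) : v \in S ->
  cnbhd_weight S <= cnbhd_weight (S :\ v) + #|edges_at S v| * (2 * #|edges_at S v| + 1).
Proof.
move=> vS; set k := #|edges_at S v|.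
have hN : #|nbhd_in S v| <= k by exact: card_nbhd_in_le.
have through_v : \sum_(e in edges_in S | v \in e) #|common_cnbhd e :&: S| <= k * k.+1.
  rewrite (eq_bigl (fun e => e \in edges_at S v)) => [|e]; last by rewrite !inE.
  rewrite -sum_nat_const; apply: leq_sum => e; rewrite inE => /andP[_ ve].
  apply: leq_trans (subset_leq_card (common_cnbhd_sub S ve)) _.
  by rewrite cardsU1 -add1n leq_add ?leq_b1.
have avoiding_v : \sum_(e in edges_in S | v \notin e) #|common_cnbhd e :&: S|
    <= cnbhd_weight (S :\ v) + k * k.
  rewrite (eq_bigl (fun e => e \in edges_in (S :\ v))) => [|e]; last by rewrite edges_in_setD1 inE.
  apply: (@leq_trans (\sum_(e in edges_in (S :\ v))
      (#|common_cnbhd e :&: (S :\ v)| + (v \in common_cnbhd e)))).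
    by apply: leq_sum => e _; apply: card_common_cnbhd_setD1.
  rewrite big_split leq_add2l /= -big_mkcondr sum1dep_card.
  apply: leq_trans (subset_leq_card (edges_in_setD1_cnbhd_sub v S)) _.
  by apply: leq_trans (card_edges_in_le _) _; apply: leq_mul.
rewrite /cnbhd_weight (bigID (fun e : {set V} => v \in e)) /=.
apply: leq_trans (leq_add through_v avoiding_v) _; rewrite -/(cnbhd_weight _); nia.
Qed.

Lemma cnbhd_weight_le d :
  (forall S : {set V}, S != set0 -> exists2 v, v \in S & #|edges_at S v| <= d) ->
  forall S : {set V}, cnbhd_weight S <= (2 * d + 1) * #|edges_in S|.
Proof.
move=> low_deg S; have [n] := ubnP #|S|; elim: n S => // n IH S.
have [-> _ | /low_deg[v vS deg_v] ltSn] := eqVneq S set0.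
  by rewrite /cnbhd_weight big1 // => e _; rewrite setI0 cards0.
have IHv : cnbhd_weight (S :\ v) <= (2 * d + 1) * #|edges_in (S :\ v)|.
  by apply: IH; move: ltSn; rewrite (cardsD1 v S) vS.
rewrite (card_edges_in_setD1 v S) mulnDr.
apply: leq_trans (cnbhd_weight_setD1 vS) _; rewrite addnC leq_add //.
by rewrite mulnC leq_mul // leq_add2r leq_mul2l deg_v orbT.
Qed.

Lemma induced_is_subgraph (S : {set V}) : S != set0 -> is_subgraph E (S, edges_in S).
Proof.
move=> Sne; apply/and3P; split => //; first by apply/subsetP => e; rewrite inE => /andP[].
by apply/forall_inP => e; rewrite inE => /andP[].
Qed.

Lemma degeneracy_low_degree (S : {set V}) : S != set0 -> degeneracy E < #|V| ->
  exists2 v, v \in S & #|edges_at S v| <= degeneracy E.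
Proof.
move=> Sne ltdV.
have min_le : min_deg (S, edges_in S) <= degeneracy E.
  exact: (@leq_bigmax_cond _ (is_subgraph E) (@min_deg V) _ (induced_is_subgraph Sne)).
have [v /andP[] | high] := pickP (fun v => (v \in S) && (#|edges_at S v| <= degeneracy E)).
  by exists v.
suff : degeneracy E < min_deg (S, edges_in S) by rewrite ltnNge min_le.
apply: (big_ind (fun x => degeneracy E < x)) => // [x y lt_x lt_y | v vS].
  by rewrite leq_min lt_x lt_y.
by have := high v; rewrite /= vS ltnNge => /negbT.
Qed.

Lemma degeneracy_gt0 : E != set0 -> 0 < degeneracy E.
Proof.
case/set0Pn => e eE; have e2 := edge_card2 eE.
have e_ne : e != set0 by rewrite -card_gt0 e2.
have sub_e : is_subgraph E (e, [set e]).
  by apply/and3P; split; rewrite ?sub1set //; apply/forall_inP => _ /set1P ->.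
apply: leq_trans (@leq_bigmax_cond _ (is_subgraph E) (@min_deg V) _ sub_e).
apply: (big_ind (fun x => 0 < x)) => [|x y x0 y0|v ve]; first by apply: leq_trans (max_card e); rewrite e2.
  by rewrite leq_min x0 y0.
by apply/card_gt0P; exists e; rewrite !inE eqxx ve.
Qed.


Lemma sum_common_cnbhd_le : degeneracy E < #|V| ->
  \sum_(e in E) #|common_cnbhd e| <= (2 * degeneracy E + 1) * #|E|.
Proof.
move=> ltdV; have edges_inT : edges_in setT = E.
  by apply/setP => e; rewrite inE subsetT andbT.
have := cnbhd_weight_le (fun S Sne => degeneracy_low_degree Sne ltdV) setT.
by rewrite /cnbhd_weight edges_inT; under eq_bigr do rewrite setIT.
Qed.

End CommonNeighbourhoods.

Section LASuccinctCovers.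
Variables (V : finType) (E : {set {set V}}).

(* g lists, for each label, the uncovered edge that created it; these seeds are distinct
   because a seed is uncovered at the moment its label is created. *)
Lemma la_reach_seed_edges s : la_reach E s -> exists g : seq {set V},
  [/\ size g = size s, uniq g, {subset g <= E} &
      forall i, i < size s -> nth set0 g i \subset nth set0 s i].
Proof.
elim => [|{}s t _ [g [sz ug gE gs]] [e [eE ncov] [[l [ls _ ->]] | [_ ->]]]].
- by exists [::].
- have szt : size (set_nth set0 s l (nth set0 s l :|: e)) = size s.
    by rewrite size_set_nth (maxn_idPr ls).
  exists g; split => //; first by rewrite szt.
  move=> i; rewrite szt => ilt; rewrite nth_set_nth /=.
  case: eqP => [->|_]; last exact: gs.
  exact: subset_trans (gs l ls) (subsetUl _ _).
- exists (rcons g e); split.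
  + by rewrite !size_rcons sz.
  + rewrite rcons_uniq ug andbT; apply/negP => /(nthP set0) [i ig ei].
    apply: (negP ncov); apply/hasP; exists (nth set0 s i).
      by apply: mem_nth; rewrite -sz.
    by rewrite -ei; apply: gs; rewrite -sz.
  + by move=> x; rewrite mem_rcons inE => /orP[/eqP->|/gE].
  + move=> i; rewrite size_rcons => ilt; rewrite !nth_rcons sz.
    by case: (ltnP i (size s)) => [/gs // | _]; case: eqP.
Qed.

Lemma la_reach_size_le s : la_reach E s -> size s <= #|E|.
Proof.
case/la_reach_seed_edges => g [<- ug gE _]; rewrite cardE.
by apply: uniq_leq_size => // e /gE; rewrite mem_enum.
Qed.

Lemma norm_A_eq_norm_D s : norm_A E s = norm_D E s.
Proof. exact: sum_card_set_exchange. Qed.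

Lemma norm_A_le s : norm_A E s <= size s * #|V|.
Proof.
rewrite mulnC -sum_nat_const; apply: leq_sum => v _.
by apply: leq_trans (max_card _) _; rewrite card_ord.
Qed.

Lemma norm_D_le_sum_common_cnbhd s : la_reach E s ->
  norm_D E s <= \sum_(e in E) #|common_cnbhd E e|.
Proof.
case/la_reach_seed_edges => g [sz ug gE gs].
apply: (@leq_trans (\sum_(l < size s) #|common_cnbhd E (nth set0 g l)|)).
  apply: leq_sum => l _; apply: subset_leq_card; apply/subsetP => w.
  by rewrite !inE; apply: subset_trans (gs l (ltn_ord l)).
have -> : \sum_(l < size s) #|common_cnbhd E (nth set0 g l)|
    = \sum_(e <- g) #|common_cnbhd E e| by rewrite (big_nth set0) big_mkord sz.
rewrite -big_enum; apply: (@uniq_sub_le_big _ _ _ leqnn (fun x y => leq_addr y x)) => //.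
  exact: enum_uniq.
by move=> e /gE; rewrite mem_enum.
Qed.

End LASuccinctCovers.

Theorem mainTheorem15 :
  exists c : nat,
  forall (V : finType) (E : {set {set V}}) (s : seq {set V}),
    simple_graph_no_isolated E ->
    LA_succinct_cover E s ->
    norm_A E s = norm_D E s /\
    norm_A E s <= c * minn (size s * #|V|) (degeneracy E * #|E|).
Proof.
exists 3 => V E s [edge_card2 _] [reach _].
split; first exact: norm_A_eq_norm_D.
have normA := norm_A_le E s; have sizeE := la_reach_size_le reach.
rewrite minnMr leq_min (leq_trans normA) ?leq_pmull //=.
have [E0 | Ene] := eqVneq E set0.
  by move: sizeE normA; rewrite E0 cards0 leqn0 => /eqP->; rewrite mul0n leqn0 => /eqP->.
have [ltdV | ledV] := ltnP (degeneracy E) #|V|.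
  rewrite norm_A_eq_norm_D; apply: leq_trans (norm_D_le_sum_common_cnbhd reach) _.
  apply: leq_trans (sum_common_cnbhd_le edge_card2 ltdV) _.
  have d_gt0 := degeneracy_gt0 edge_card2 Ene.
  by rewrite mulnA leq_mul2r; apply/orP; right; lia.
apply: leq_trans normA (leq_trans (leq_mul sizeE ledV) _).
by rewrite mulnC leq_pmull.
Qed.
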